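(* Let $G$ be a finite graph and let $k$ be an integer with $k>\chi(G)$. Then $G$ is determined up to isomorphism by the recolouring graph $\mathcal{C}_k(G)$, even without knowing the value of $k$: if $G'$ is another finite graph and $k'>\chi(G')$ is an integer with $\mathcal{C}_k(G)\cong\mathcal{C}_{k'}(G')$, then $G\cong G'$.
   Context: All graphs are finite and simple. For a positive integer $k$, a (proper) $k$-colouring of $G$ is a map $c:V(G)\to\{1,\dots,k\}$ with $c(u)\neq c(v)$ for every edge $uv$; $\chi(G)$ is the least $k$ for which a $k$-colouring exists. The $k$-recolouring graph $\mathcal{C}_k(G)$ is the graph whose vertices are all $k$-colourings of $G$, two colourings being adjacent if and only if they differ at exactly one vertex of $G$. *)

From mathcomp Require Import all_boot.
Set Implicit Arguments. Unset Strict Implicit. Unset Printing Implicit Defensive.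

Record sgraph := SGraph {
  vert :> finType;
  adj : rel vert;
  adj_sym : symmetric adj;
  adj_irr : irreflexive adj }.

Definition graph_iso (V W : Type) (e : rel V) (f : rel W) : Prop :=
  exists phi : V -> W, bijective phi /\ forall x y, f (phi x) (phi y) = e x y.

Definition proper (G : sgraph) (k : nat) (c : {ffun G -> 'I_k}) : bool :=
  [forall u, forall v, adj u v ==> (c u != c v)].

Definition colouring (G : sgraph) (k : nat) := {c : {ffun G -> 'I_k} | proper c}.

Lemma colourable_ex (G : sgraph) : exists k, exists c : {ffun G -> 'I_k}, proper c.
Proof.
exists #|G|; exists [ffun v => enum_rank v].
apply/forallP => u; apply/forallP => v; apply/implyP => huv.
rewrite !ffunE; apply/negP => /eqP /enum_rank_inj huv'.
by subst; rewrite adj_irr in huv.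
Qed.

Definition chi (G : sgraph) : nat :=
  ex_minn (P := fun k => [exists c : {ffun G -> 'I_k}, proper c])
    (let: ex_intro k (ex_intro c hc) := colourable_ex G in
     ex_intro _ k (introT existsP (ex_intro _ c hc))).

Definition recol_adj (G : sgraph) (k : nat) : rel (colouring G k) :=
  fun a b => #|[set v : G | sval a v != sval b v]| == 1.

From Pilot Require Import Defs.
From mathcomp Require Import all_boot.
Set Implicit Arguments. Unset Strict Implicit. Unset Printing Implicit Defensive.

(* Since k > chi(G), there is a proper colouring alpha avoiding some colour i.
   Recolouring a single vertex v of alpha to i gives neighbours beta_v of alpha
   in C_k(G), and an isomorphism psi : C_k(G) -> C_k'(G') sends each beta_v to
   a colouring differing from psi(alpha) at a single vertex f(v).  Two distinct
   beta's differ at two vertices, which makes f injective.  If uv is an edge,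
   alpha is the only common neighbour of beta_u and beta_v; if f(u)f(v) were a
   non-edge, the two recolourings at f(u) and f(v) could be performed together,
   producing a second common neighbour of psi(beta_u) and psi(beta_v).  So f is
   an injective homomorphism G -> G', symmetrically there is one G' -> G, and
   counting vertices and edges shows that f is an isomorphism. *)

Lemma adj_neq (G : sgraph) (u v : G) : adj u v -> u != v.
Proof. by apply: contraTneq => ->; rewrite adj_irr. Qed.

Lemma graph_iso_sym (T T' : Type) (e : rel T) (e' : rel T') :
  graph_iso e e' -> graph_iso e' e.
Proof.
move=> [phi [[phi' phiK phiK'] phi_adj]]; exists phi'; split; first by exists phi.
by move=> x y; rewrite -phi_adj !phiK'.
Qed.

Lemma graph_iso_inj_homo (T T' : finType) (e : rel T) (e' : rel T')
    (f : T -> T') (g : T' -> T) :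
  injective f -> {homo f : x y / e x y >-> e' x y} ->
  injective g -> {homo g : x y / e' x y >-> e x y} ->
  graph_iso e e'.
Proof.
move=> f_inj f_homo g_inj g_homo.
pose E := [set p : T * T | e p.1 p.2].
pose E' := [set p : T' * T' | e' p.1 p.2].
pose fE (p : T * T) := (f p.1, f p.2).
pose gE (p : T' * T') := (g p.1, g p.2).
have fE_inj : injective fE by move=> [? ?] [? ?] [/f_inj -> /f_inj ->].
have gE_inj : injective gE by move=> [? ?] [? ?] [/g_inj -> /g_inj ->].
have fE_sub : fE @: E \subset E'.
  by apply/subsetP => _ /imsetP[[x y] + ->]; rewrite !inE; apply: f_homo.
have gE_sub : gE @: E' \subset E.
  by apply/subsetP => _ /imsetP[[x y] + ->]; rewrite !inE; apply: g_homo.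
have fE_onto : fE @: E = E'.
  apply/eqP; rewrite eqEcard fE_sub card_imset //.
  by rewrite -(card_imset _ gE_inj) subset_leq_card.
exists f; split.
  exact: inj_card_bij f_inj (leq_card _ g_inj).
move=> x y; apply/idP/idP => [fxy|]; last exact: f_homo.
have : (f x, f y) \in E' by rewrite inE.
by rewrite -fE_onto => /imsetP[[a b]]; rewrite inE => eab [/f_inj -> /f_inj ->].
Qed.

Section Recolouring.
Variables (G : sgraph) (k : nat).
Implicit Types (a b d : {ffun G -> 'I_k}) (u v w x z : G) (i : 'I_k).

Definition recolour a v i : {ffun G -> 'I_k} := [ffun z => if z == v then i else a z].

Definition differ_only_at a b x := forall z, (a z != b z) = (z == x).

Lemma properP a u v : Defs.proper a -> adj u v -> a u != a v.
Proof. by move=> /forallP/(_ u)/forallP/(_ v)/implyP; apply. Qed.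

Lemma proper_recolour a v i :
  Defs.proper a -> (forall u, adj u v -> a u != i) -> Defs.proper (recolour a v i).
Proof.
move=> pa a_nbr; apply/forallP => z1; apply/forallP => z2; apply/implyP.
rewrite !ffunE; case: (eqVneq z1 v) => [->|_]; case: (eqVneq z2 v) => [->|_].
- by rewrite adj_irr.
- by rewrite adj_sym eq_sym; apply: a_nbr.
- exact: a_nbr.
- exact: properP.
Qed.

Lemma differ_only_at_recolour a v i : a v != i -> differ_only_at a (recolour a v i) v.
Proof. by move=> av z; rewrite ffunE; case: (eqVneq z v) => [->|]; rewrite ?eqxx. Qed.

Lemma differ_only_at_agree a b x z : differ_only_at a b x -> z != x -> a z = b z.
Proof. by move=> ab zx; apply/eqP; rewrite -[_ == _]negbK ab (negbTE zx). Qed.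

Lemma differ_only_at_same_vertex a b1 b2 w :
  differ_only_at a b1 w -> differ_only_at a b2 w -> b1 = b2 \/ differ_only_at b1 b2 w.
Proof.
move=> ab1 ab2.
have b12 z : z != w -> b1 z = b2 z.
  by move=> zw; rewrite -(differ_only_at_agree ab1 zw) (differ_only_at_agree ab2 zw).
case: (eqVneq (b1 w) (b2 w)) => [b12w|b12w]; [left; apply/ffunP | right] => z.
  by case: (eqVneq z w) => [->|/b12].
by case: (eqVneq z w) => [->|/b12 ->]; rewrite ?eqxx.
Qed.

Lemma recol_adjP (a b : colouring G k) :
  reflect (exists x, differ_only_at (sval a) (sval b) x) (recol_adj a b).
Proof.
apply: (iffP cards1P) => [[x /setP ab]|[x ab]]; exists x.
  by move=> z; move: (ab z); rewrite !inE.
by apply/setP => z; rewrite !inE ab.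
Qed.

Lemma differ_twice_not_recol_adj (a b : colouring G k) u v :
  u != v -> sval a u != sval b u -> sval a v != sval b v -> ~~ recol_adj a b.
Proof.
move=> uv au av; apply/recol_adjP => -[x ab].
by move: au av uv; rewrite !ab => /eqP -> /eqP ->; rewrite eqxx.
Qed.

(* Two recolourings at non-adjacent vertices commute: performing both gives a
   fourth corner of a square in C_k(G). *)
Lemma recol_adj_square (a b1 b2 : colouring G k) w1 w2 :
  w1 != w2 -> ~~ adj w1 w2 ->
  differ_only_at (sval a) (sval b1) w1 -> differ_only_at (sval a) (sval b2) w2 ->
  exists2 d : colouring G k, d != a & recol_adj b1 d && recol_adj b2 d.
Proof.
case: a b1 b2 => [a pa] [b1 pb1] [b2 pb2] /= w12 nadj ab1 ab2.
have b1a z : z != w1 -> b1 z = a z by move/(differ_only_at_agree ab1).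
have b2a z : z != w2 -> b2 z = a z by move/(differ_only_at_agree ab2).
have pd : Defs.proper (recolour b2 w1 (b1 w1)).
  apply: proper_recolour pb2 _ => u uw1.
  have uw2 : u != w2 by apply: contraNneq nadj => <-; rewrite adj_sym.
  by rewrite (b2a _ uw2) -(b1a _ (adj_neq uw1)); apply: properP pb1 uw1.
exists (exist _ (recolour b2 w1 (b1 w1)) pd).
  have ab1w : a w1 != b1 w1 by rewrite ab1.
  apply: contra_neq ab1w => /(congr1 (fun c : colouring G k => sval c w1)) /=.
  by rewrite ffunE eqxx => ->.
apply/andP; split; apply/recol_adjP => /=; [exists w2 | exists w1] => z;
  rewrite ffunE; case: (eqVneq z w1) => [->|zw1].
- by rewrite eqxx (negbTE w12).
- by rewrite (b1a _ zw1) ab2.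
- by rewrite (b2a _ w12) ab1 eqxx.
- by rewrite eqxx.
Qed.

End Recolouring.

Lemma chi_lt_missing_colour (G : sgraph) k :
  chi G < k -> exists (alpha : colouring G k) (i : 'I_k), forall v, sval alpha v != i.
Proof.
rewrite /chi; case: ex_minnP => m /existsP[c pc] _ m_lt_k.
pose c' := [ffun v => widen_ord (ltnW m_lt_k) (c v)].
have pc' : Defs.proper c'.
  apply/forallP => u; apply/forallP => v; apply/implyP => uv.
  by rewrite !ffunE -(inj_eq val_inj) /= (inj_eq val_inj) (properP pc uv).
exists (exist _ c' pc'), (Ordinal m_lt_k) => v.
by rewrite /= ffunE -(inj_eq val_inj) /= neq_ltn ltn_ord.
Qed.

Section RecolouringEmbedding.
Variables (G G' : sgraph) (k k' : nat) (psi : colouring G k -> colouring G' k').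
Hypotheses (psi_bij : bijective psi)
  (psi_adj : forall a b, recol_adj (psi a) (psi b) = recol_adj a b).
Variables (alpha : colouring G k) (i : 'I_k).
Hypothesis alpha_miss : forall v, sval alpha v != i.

Lemma proper_recolour_missing v : Defs.proper (recolour (sval alpha) v i).
Proof. by apply: proper_recolour (svalP alpha) _ => u _; apply: alpha_miss. Qed.

Definition recoloured v : colouring G k :=
  exist _ (recolour (sval alpha) v i) (proper_recolour_missing v).

Lemma recoloured_neq u v : u != v -> sval (recoloured u) u != sval (recoloured v) u.
Proof. by move=> uv; rewrite /= !ffunE eqxx (negbTE uv) eq_sym alpha_miss. Qed.

Lemma recoloured_not_adj u v : u != v -> ~~ recol_adj (recoloured u) (recoloured v).
Proof.
move=> uv; have vu : v != u by rewrite eq_sym.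
apply: differ_twice_not_recol_adj uv (recoloured_neq uv) _.
by rewrite eq_sym; apply: recoloured_neq vu.
Qed.

Lemma recoloured_common_neighbour u v (d : colouring G k) :
  adj u v -> recol_adj (recoloured u) d -> recol_adj (recoloured v) d -> d = alpha.
Proof.
(* Both u and v change along the two steps from d; if the step from
   [recoloured u] changed v, then d u = d v = i. *)
move=> uv /recol_adjP[x ud] /recol_adjP[y vd].
have u_v := adj_neq uv; have v_u : v != u by rewrite eq_sym.
have u_xy : (u == x) || (u == y).
  rewrite -ud -vd /= !ffunE eqxx (negbTE u_v).
  by case: (eqVneq i (sval d u)) => //= <-; rewrite alpha_miss.
have v_xy : (v == x) || (v == y).
  rewrite -ud -vd /= !ffunE eqxx (negbTE v_u).
  by case: (eqVneq i (sval d v)) => [<-|]; rewrite ?orbT // alpha_miss.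
case: (eqVneq u x) u_xy => [ux _ | u_x /= /eqP u_y]; [subst x | subst y].
  move: v_xy; rewrite (negbTE v_u) /= => /eqP v_y; subst y.
  apply/val_inj/ffunP => z; case: (eqVneq z u) => [->|zu].
    by rewrite -(differ_only_at_agree vd u_v) ffunE (negbTE u_v).
  by rewrite -(differ_only_at_agree ud zu) ffunE (negbTE zu).
move: v_xy; rewrite (negbTE v_u) orbF => /eqP v_x; subst x.
case/negP: (properP (svalP d) uv).
by rewrite -(differ_only_at_agree ud u_x) -(differ_only_at_agree vd v_u) !ffunE !eqxx.
Qed.

Lemma exists_vertex_map : exists f : G -> G',
  forall v, differ_only_at (sval (psi alpha)) (sval (psi (recoloured v))) (f v).
Proof.
have psi_nbr v : exists w, differ_only_at (sval (psi alpha)) (sval (psi (recoloured v))) w.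
  apply/recol_adjP; rewrite psi_adj; apply/recol_adjP.
  by exists v; apply: differ_only_at_recolour.
exact: fin_all_exists psi_nbr.
Qed.

Section VertexMap.
Variable f : G -> G'.
Hypothesis f_spec :
  forall v, differ_only_at (sval (psi alpha)) (sval (psi (recoloured v))) (f v).

Lemma vertex_map_inj : injective f.
Proof.
move=> u v fuv; apply/eqP/contraT => uv.
have psi_v := f_spec v; rewrite -fuv in psi_v.
case: (differ_only_at_same_vertex (f_spec u) psi_v)
  => [/val_inj/(bij_inj psi_bij) uv_eq | uv_diff].
  by move: (recoloured_neq uv); rewrite uv_eq eqxx.
have : recol_adj (psi (recoloured u)) (psi (recoloured v)).
  by apply/recol_adjP; exists (f u).
by rewrite psi_adj (negbTE (recoloured_not_adj uv)).
Qed.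

Lemma vertex_map_homo : {homo f : u v / adj u v}.
Proof.
move=> u v uv; apply: contraT => nadj.
have fuv : f u != f v by rewrite (inj_eq vertex_map_inj) adj_neq.
have [d d_alpha /andP[ud vd]] := recol_adj_square fuv nadj (f_spec u) (f_spec v).
have [psi' psiK psiK'] := psi_bij.
have : psi' d = alpha.
  by apply: recoloured_common_neighbour uv _ _; rewrite -psi_adj psiK'.
by move/(congr1 psi); rewrite psiK' => d_eq; rewrite d_eq eqxx in d_alpha.
Qed.

End VertexMap.

Lemma recolouring_embedding : exists f : G -> G', injective f /\ {homo f : u v / adj u v}.
Proof.
have [f f_spec] := exists_vertex_map.
by exists f; split; [apply: vertex_map_inj f_spec | apply: vertex_map_homo f_spec].
Qed.

End RecolouringEmbedding.

Lemma recol_iso_embedding (G G' : sgraph) k k' :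
  chi G < k -> graph_iso (@recol_adj G k) (@recol_adj G' k') ->
  exists f : G -> G', injective f /\ {homo f : u v / adj u v}.
Proof.
move=> /chi_lt_missing_colour[alpha [i alpha_miss]] [psi [psi_bij psi_adj]].
exact: (recolouring_embedding psi_bij psi_adj alpha_miss).
Qed.

Theorem theorem1p2 (G G' : sgraph) (k k' : nat) :
  chi G < k -> chi G' < k' ->
  graph_iso (@recol_adj G k) (@recol_adj G' k') ->
  graph_iso (@adj G) (@adj G').
Proof.
move=> chi_k chi_k' iso.
have [f [f_inj f_homo]] := recol_iso_embedding chi_k iso.
have [g [g_inj g_homo]] := recol_iso_embedding chi_k' (graph_iso_sym iso).
exact: graph_iso_inj_homo f_inj f_homo g_inj g_homo.
Qed.
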